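(* Let $f:\mathbf{M}\to\mathbf{M}$ be a measurable map preserving a probability measure $\mu$, and let $(U_n)_{n\ge1}$ be a nested sequence of measurable sets ($U_{n+1}\subset U_n$) with $\mu(U_n)>0$ for all $n$ and $\mu(U_n)\to0$. Assume that $\pi_{\operatorname{ess}}(U_n)\to\infty$ as $n\to\infty$. Then for every $\ell\ge2$ the limit $$\hat\alpha_\ell=\lim_{K\to\infty}\lim_{n\to\infty}\mu_{U_n}\big(\tau^{\ell-1}_{U_n}\le K\big)$$ exists and equals $0$.
   Context: For a measurable set $U$, the first entry time is $\tau_U(x)=\min\{j\ge1: f^j(x)\in U\}$; higher entry times are defined recursively by $\tau_U^1=\tau_U$, $\tau^j_U(x)=\tau^{j-1}_U(x)+\tau_U(f^{\tau^{j-1}_U(x)}(x))$, with the convention $\tau^0_U=0$. $\mu_U$ denotes the conditional measure $\mu_U(A)=\mu(A\cap U)/\mu(U)$. The essential period of a set $U$ of positive measure is $\pi_{\operatorname{ess}}(U)=\min\{k>0:\mu(f^{-k}U\cap U)>0\}$. *)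

From HB Require Import structures.
From mathcomp Require Import all_boot all_order all_algebra.
From mathcomp Require Import all_classical all_reals all_analysis.
Set Implicit Arguments. Unset Strict Implicit. Unset Printing Implicit Defensive.
Import Order.TTheory GRing.Theory Num.Theory.
Local Open Scope classical_set_scope.
Local Open Scope ring_scope.

(* First entry time tau_U(x) = min {j >= 1 : f^j x \in U}; None encodes +oo
   (no entry). *)
Definition first_entry (T : Type) (f : T -> T) (U : set T) (x : T) : option nat :=
  match pselect (exists j, ((0 < j)%N && `[< U (iter j f x) >])) with
  | left H => Some (ex_minn H)
  | right _ => None
  end.

Fixpoint entry_time (T : Type) (f : T -> T) (U : set T) (j : nat) (x : T)
  : option nat :=
  match j with
  | 0 => Some 0%N
  | j'.+1 => match entry_time f U j' x with
             | Some t => omap (addn t) (first_entry f U (iter t f x))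
             | None => None
             end
  end.

Definition entry_le (T : Type) (f : T -> T) (U : set T) (j K : nat) : set T :=
  [set x | match entry_time f U j x with Some t => (t <= K)%N | None => False end].

Definition cond_meas (d : measure_display) (T : measurableType d) (R : realType)
  (mu : probability T R) (U A : set T) : R :=
  fine (mu (A `&` U)) / fine (mu U).

(* Essential period: min {k > 0 : mu(f^{-k} U `&` U) > 0}; None encodes +oo. *)
Definition ess_period (d : measure_display) (T : measurableType d) (R : realType)
  (mu : probability T R) (f : T -> T) (U : set T) : option nat :=
  match pselect (exists k, ((0 < k)%N &&
          `[< (0 < mu ((iter k f) @^-1` U `&` U))%E >])) with
  | left H => Some (ex_minn H)
  | right _ => None
  end.

From HB Require Import structures.
From mathcomp Require Import all_boot all_order all_algebra.
From mathcomp Require Import all_classical all_reals all_analysis.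
Import Order.TTheory GRing.Theory Num.Theory numFieldNormedType.Exports.
Local Open Scope classical_set_scope.
Local Open Scope ring_scope.

(* If the essential period of U exceeds K, then mu(U `&` f^{-k} U) = 0 for
   0 < k <= K, so almost no point of U returns to U within K steps.  A point of
   U with tau^{l-1}_U <= K (l >= 2) returns at time tau^{l-1}_U, hence
   mu_U(tau^{l-1}_U <= K) = 0 as soon as pi_ess(U) > K, which holds for all
   large n.  The limit is thus 0 for every K, and so is alpha_l. *)

Section entry_times.
Context {d : measure_display} {M : measurableType d} (f : M -> M).

Lemma first_entryP (U : set M) x s :
  first_entry f U x = Some s <->
  [/\ (0 < s)%N, U (iter s f x) & forall i, (0 < i < s)%N -> ~ U (iter i f x)].
Proof.
rewrite /first_entry; case: pselect => [some|none]; last first.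
  by split=> // -[s0 Us _]; case: none; exists s; rewrite s0 asboolT.
case: ex_minnP => m /andP[m0 /asboolP Um] m_min; split.
- move=> [<-]; split=> // i /andP[i0 im] Ui.
  have := m_min i; rewrite i0 asboolT // => /(_ isT).
  by rewrite leqNgt im.
- move=> [s0 Us s_min]; congr Some; apply/eqP; rewrite eqn_leq.
  rewrite m_min /=; last by rewrite s0 asboolT.
  by rewrite leqNgt; apply/negP => sm; apply: (s_min m) Um; rewrite m0.
Qed.

Lemma entry_time_succ_return {U : set M} {j x t} :
  entry_time f U j.+1 x = Some t -> (0 < t)%N /\ U (iter t f x).
Proof.
rewrite /=; case: (entry_time f U j x) => [t0|] //.
case E: (first_entry f U (iter t0 f x)) => [s|] //= [<-].
have [s0 Us _] := (first_entryP _ _ _).1 E.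
by rewrite addn_gt0 s0 orbT addnC iterD.
Qed.

Definition returns_within (U : set M) (K : nat) : set M :=
  [set x | U x /\ exists2 k, (0 < k <= K)%N & U (iter k f x)].

Lemma entry_le_subset_returns_within (U : set M) j K :
  entry_le f U j.+1 K `&` U `<=` returns_within U K.
Proof.
move=> x [+ Ux]; rewrite /entry_le /mkset.
case E: (entry_time f U j.+1 x) => [t|] // tK.
have [t0 Ut] := entry_time_succ_return E.
by split=> //; exists t => //; rewrite t0.
Qed.

Hypothesis f_meas : measurable_fun setT f.

Lemma measurable_fun_iter k : measurable_fun setT (iter k f).
Proof.
elim: k => [|k IHk]; first exact: measurable_id.
exact: (measurableT_comp f_meas IHk).
Qed.

Lemma measurable_preimage_iter k (B : set M) :
  measurable B -> measurable (iter k f @^-1` B).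
Proof.
by move=> mB; rewrite -[X in measurable X]setTI; apply: measurable_fun_iter.
Qed.

Variable U : set M.
Hypothesis mU : measurable U.

Lemma measurable_first_entry s :
  measurable [set x | first_entry f U x = Some s].
Proof.
case: s => [|s].
  suff -> : [set x | first_entry f U x = Some 0%N] = set0 by [].
  by apply/seteqP; split=> // x /first_entryP[].
suff -> : [set x | first_entry f U x = Some s.+1] =
    iter s.+1 f @^-1` U `&`
    \bigcap_(i in [set i | (0 < i < s.+1)%N]) iter i f @^-1` ~` U.
  apply: measurableI; first exact: measurable_preimage_iter.
  apply: bigcap_measurableType => i _.
  exact/measurable_preimage_iter/measurableC.
apply/seteqP; split=> x.
- by move=> /first_entryP[_ Us s_min]; split=> // i /s_min.
- by move=> [Us s_min]; apply/first_entryP; split=> // i /s_min.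
Qed.

Lemma measurable_entry_time j t :
  measurable [set x | entry_time f U j x = Some t].
Proof.
elim: j t => [[|t]|j IHj t] /=.
- suff -> : [set x : M | Some 0%N = Some 0%N] = setT by [].
  by apply/seteqP; split.
- suff -> : [set x : M | Some 0%N = Some t.+1] = set0 by [].
  by apply/seteqP; split.
suff -> : [set x | entry_time f U j.+1 x = Some t] =
    \bigcup_(t0 in [set t0 | (t0 <= t)%N])
      ([set x | entry_time f U j x = Some t0] `&`
       iter t0 f @^-1` [set y | first_entry f U y = Some (t - t0)%N]).
  apply: bigcup_measurable => t0 _; apply: measurableI; first exact: IHj.
  exact/measurable_preimage_iter/measurable_first_entry.
apply/seteqP; split=> x /=.
- case Et0: (entry_time f U j x) => [t0|] //.
  case Es: (first_entry f U (iter t0 f x)) => [s|] //= [<-].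
  by exists t0; rewrite /= ?leq_addr ?addKn.
- by move=> [t0 /= t0t [-> /= ->]] /=; rewrite subnKC.
Qed.

Lemma measurable_entry_le j K : measurable (entry_le f U j K).
Proof.
suff -> : entry_le f U j K =
    \bigcup_(t in [set t | (t <= K)%N]) [set x | entry_time f U j x = Some t].
  by apply: bigcup_measurable => t _; apply: measurable_entry_time.
apply/seteqP; split=> x; rewrite /entry_le /=.
- by case E: (entry_time f U j x) => [t|] // tK; exists t.
- by move=> [t /= tK ->].
Qed.

End entry_times.

Section essential_period.
Context (d : measure_display) (M : measurableType d) (R : realType)
  (mu : probability M R) (f : M -> M).
Hypothesis f_meas : measurable_fun setT f.

Definition ess_period_ge (U : set M) (N : nat) : bool :=
  if ess_period mu f U is Some k then (N <= k)%N else true.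

Lemma ess_period_return_null (U : set M) K k :
  ess_period_ge U K.+1 -> (0 < k <= K)%N ->
  mu (iter k f @^-1` U `&` U) = 0%E.
Proof.
rewrite /ess_period_ge /ess_period => Kper /andP[k0 kK].
apply/eqP; rewrite eq_le measure_ge0 andbT leNgt; apply/negP => pos.
move: Kper; case: pselect => [some|]; last first.
  by move=> none _; apply: none; exists k; rewrite k0 asboolT.
case: ex_minnP => m _ m_min Km.
have mk : (m <= k)%N by rewrite m_min // k0 asboolT.
by have := leq_trans Km (leq_trans mk kK); rewrite ltnn.
Qed.

Lemma negligible_returns_within (U : set M) K : measurable U ->
  ess_period_ge U K.+1 -> mu.-negligible (returns_within f U K).
Proof.
move=> mU Kper.
pose ret k := [set x | (0 < k <= K)%N /\ (iter k f @^-1` U `&` U) x].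
apply: (@negligibleS _ _ _ _ (\bigcup_k ret k)) => [x [Ux [k kK Uk]]|].
  by exists k.
apply: negligible_bigcup => k; have [kK|kK] := boolP (0 < k <= K)%N.
- exists (iter k f @^-1` U `&` U); split; last by move=> x [].
  + exact/measurableI/mU/measurable_preimage_iter.
  + exact: ess_period_return_null Kper kK.
- by apply: negligibleS (negligible_set0 mu) => x []; rewrite (negbTE kK).
Qed.

Lemma cond_meas_entry_le_eq0 (U : set M) j K : measurable U ->
  ess_period_ge U K.+1 -> cond_meas mu U (entry_le f U j.+1 K) = 0.
Proof.
move=> mU Kper; rewrite /cond_meas.
suff -> : mu (entry_le f U j.+1 K `&` U) = 0%E by rewrite mul0r.
apply: measure_negligible; first exact/measurableI/mU/measurable_entry_le.
exact: negligibleS (entry_le_subset_returns_within f U j K)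
  (negligible_returns_within U K mU Kper).
Qed.

End essential_period.

Theorem lemma3p1 (d : measure_display) (M : measurableType d) (R : realType)
  (mu : probability M R) (f : M -> M)
  (f_meas : measurable_fun setT f)
  (f_pres : forall A : set M, measurable A -> mu (f @^-1` A) = mu A)
  (U : nat -> set M)
  (U_meas : forall n, measurable (U n))
  (U_nest : forall n, U n.+1 `<=` U n)
  (U_pos : forall n, (0 < mu (U n))%E)
  (U_to0 : mu (U n) @[n --> \oo] --> 0%E)
  (pi_infty : forall N : nat, \forall n \near \oo,
      match ess_period mu f (U n) with Some k => (N <= k)%N | None => true end) :
  forall l : nat, (2 <= l)%N ->
  exists alpha : nat -> R,
    (forall K : nat,
       cond_meas mu (U n) (entry_le f (U n) l.-1 K) @[n --> \oo] --> alpha K) /\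
    alpha K @[K --> \oo] --> 0.
Proof.
case=> [|[|l]] // _; exists (fun=> 0); split=> [K|]; last exact: cvg_cst.
apply: cvg_near_cst; apply: filterS (pi_infty K.+1) => n Kper.
exact: cond_meas_entry_le_eq0.
Qed.
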